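(* Let $d=1$ and let $0<\delta<2/3$. The perturbed senile reinforced random walk (Model I) with parameter $\delta$ is diffusive: the limit $\nu(\delta)=\lim_{n\to\infty}\mathbb{E}[|S_n|^2]/n$ exists and is strictly positive, and it is given by \[ \nu(\delta)=\frac{\mathbb{P}(\tau \text{ odd})}{\mathbb{P}(\tau \text{ even})\,\mathbb{E}[\tau]} . \] Moreover $\nu(\delta)\to 0$ as $\delta\to0^+$, and $\nu(\delta)$ is of order $1/|\log\delta|$: there are constants $0<c\le C<\infty$ such that $c/|\log\delta|\le \nu(\delta)\le C/|\log\delta|$ for all sufficiently small $\delta>0$.
   Context: Model I on $\mathbb{Z}^d$ with parameter $\delta>0$: a sequence $(S_n)_{n\ge0}$ of $\mathbb{Z}^d$-valued random variables with filtration $\mathcal{F}_n=\sigma(S_0,\dots,S_n)$, such that $S_0=0$ a.s. and $S_1$ is uniformly distributed on the $2d$ nearest neighbours of the origin. For $n\ge1$ let $e_n=\{S_{n-1},S_n\}$ (an undirected edge) and $m_n=\max\{k\ge1: e_{n-l+1}=e_n \text{ for all } 1\le l\le k\}$ (the number of consecutive times the current edge has just been traversed). For $n\ge1$, conditionally on $\mathcal{F}_n$, the walk traverses $e_n$ again (i.e. $S_{n+1}=S_{n-1}$) with probability $\max\{\frac{1+m_n}{2d+m_n}-\delta,0\}$, and otherwise moves to one of the other $2d-1$ nearest neighbours of $S_n$, each equally likely. (In $d=1$: it recrosses $e_n$ with probability $\frac{1+m_n}{2+m_n}-\delta$ and crosses the other edge with probability $\frac{1}{2+m_n}+\delta$.)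 The random variable $\tau=\sup\{n\ge1: S_m\in\{0,S_1\}\ \text{for all } m\le n\}$ is the number of consecutive traversals of the first edge before leaving it. The walk is called diffusive if $\nu=\lim_{n\to\infty}\mathbb{E}[|S_n|^2]/n$ exists in $(0,\infty)$; $\nu$ is the diffusion constant. *)

From Stdlib Require Import Reals ZArith List Bool.
Import ListNotations.
Open Scope R_scope.

(* Probability of recrossing the current edge after it has been traversed
   m consecutive times (d = 1): max{(1+m)/(2+m) - delta, 0}. *)
Definition recross_prob (delta : R) (m : nat) : R :=
  Rmax ((1 + INR m) / (2 + INR m) - delta) 0.

(* A trajectory of length n is recorded as its list of steps in {-1,+1}.
   [walk_prob_aux delta prev m steps]: conditional probability of the
   remaining steps, given that the last step was [prev] and the current edge
   has just been traversed m consecutive times.  Reversing the last step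
   (= recrossing e_n) has probability recross_prob; continuing in the same
   direction (= moving to the unique other neighbour) the complement. *)
Fixpoint walk_prob_aux (delta : R) (prev : Z) (m : nat) (steps : list Z) : R :=
  match steps with
  | [] => 1
  | s :: rest =>
      if Z.eqb s (- prev)%Z then recross_prob delta m * walk_prob_aux delta s (S m) rest
      else if Z.eqb s prev then (1 - recross_prob delta m) * walk_prob_aux delta s 1 rest
      else 0
  end.

Definition path_prob (delta : R) (steps : list Z) : R :=
  match steps with
  | [] => 1
  | s :: rest =>
      (if Z.eqb s 1 || Z.eqb s (-1) then / 2 else 0) * walk_prob_aux delta s 1 rest
  end.

Fixpoint all_paths (n : nat) : list (list Z) :=
  match n with
  | O => [[]]
  | S k => map (cons 1%Z) (all_paths k) ++ map (cons (-1)%Z) (all_paths k)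
  end.

Definition sumR (l : list R) : R := fold_right Rplus 0 l.

Fixpoint positions (acc : Z) (steps : list Z) : list Z :=
  match steps with
  | [] => []
  | s :: rest => (acc + s)%Z :: positions (acc + s)%Z rest
  end.

Definition endpoint (steps : list Z) : Z := fold_right Z.add 0%Z steps.

Definition ES2 (delta : R) (n : nat) : R :=
  sumR (map (fun p => path_prob delta p * (IZR (endpoint p)) ^ 2) (all_paths n)).

(* Event {tau = k} on the first k+1 steps: S_m in {0, S_1} for all m <= k,
   and S_{k+1} not in {0, S_1}. *)
Definition tau_event (k : nat) (steps : list Z) : bool :=
  let ps := positions 0 steps in
  let s1 := nth 0 ps 0%Z in
  let onedge := fun x : Z => Z.eqb x 0 || Z.eqb x s1 in
  forallb onedge (firstn k ps) && negb (onedge (nth k ps 0%Z)).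

Definition tau_pmf (delta : R) (k : nat) : R :=
  sumR (map (fun p => if tau_event k p then path_prob delta p else 0)
            (all_paths (S k))).

(* Let m_n be the number of consecutive traversals of the current edge; m_n is a
   Markov chain that recrosses from state k with probability r_k = recross_prob.
   A bounded corrector g makes S_n + (last step) * g(m_n) a martingale, so
   E[S_n^2] is, up to O(1), the sum of the conditional mean increments
   h(m_i) = 1 + 2 g(m_i) of its square; a second, Poisson, corrector shows
   that their ergodic average is nu = P(tau odd) / (P(tau even) E[tau]).
   Finally P(tau > k) lies between (2/(k+2)) (1 - 3 delta/2)^k and
   (2/(k+2)) (1 - delta)^k, so E[tau] is a harmonic sum cut off near
   k = 1/delta, of order |log delta|, while P(tau even) and P(tau odd) stay
   bounded away from 0. *)

From Coquelicot Require Import Coquelicot.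
From Stdlib Require Import Reals ZArith List Bool Lra Lia.
Import ListNotations.
Open Scope R_scope.

Lemma sumR_app (l1 l2 : list R) : sumR (l1 ++ l2) = sumR l1 + sumR l2.
Proof. induction l1; simpl; [ring | rewrite IHl1; ring]. Qed.

Section ListSums.
Context {A : Type}.

Lemma sumR_map_scal (F : A -> R) c l :
  sumR (map (fun x => c * F x) l) = c * sumR (map F l).
Proof. induction l; simpl; [ring | rewrite IHl; ring]. Qed.

Lemma sumR_map_plus (F G : A -> R) l :
  sumR (map (fun x => F x + G x) l) = sumR (map F l) + sumR (map G l).
Proof. induction l; simpl; [ring | rewrite IHl; ring]. Qed.

Lemma sumR_map_ext (F G : A -> R) l :
  (forall x, In x l -> F x = G x) -> sumR (map F l) = sumR (map G l).
Proof. induction l; simpl; intros H; auto. rewrite H, IHl; auto. Qed.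

Lemma sumR_map_le (F G : A -> R) l :
  (forall x, In x l -> F x <= G x) -> sumR (map F l) <= sumR (map G l).
Proof.
  induction l; simpl; intros H; [lra |].
  assert (F a <= G a) by auto. assert (sumR (map F l) <= sumR (map G l)) by auto. lra.
Qed.

End ListSums.

Definition is_step (s : Z) : Prop := s = 1%Z \/ s = (-1)%Z.

Lemma is_step_opp s : is_step s -> is_step (- s).
Proof. intros [-> | ->]; red; lia. Qed.

Lemma IZR_step_sq s : is_step s -> IZR s * IZR s = 1.
Proof. intros [-> | ->]; simpl; ring. Qed.

Lemma all_paths_steps n p :
  In p (all_paths n) -> length p = n /\ Forall is_step p.
Proof.
  revert p; induction n; intros p Hp; simpl in Hp.
  - destruct Hp as [<- | []]. simpl; auto.
  - apply in_app_or in Hp.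
    destruct Hp as [Hp | Hp]; apply in_map_iff in Hp; destruct Hp as [r [<- Hr]];
      destruct (IHn r Hr); simpl; split; auto; constructor; auto; red; auto.
Qed.

Lemma recross_prob_bounds d m : 0 < d -> 0 <= recross_prob d m <= 1.
Proof.
  intros Hd. unfold recross_prob, Rmax. destruct Rle_dec; [lra |].
  assert (0 <= INR m) by apply pos_INR.
  assert ((1 + INR m) / (2 + INR m) <= 1).
  { apply Rmult_le_reg_r with (2 + INR m); [lra |].
    unfold Rdiv; rewrite Rmult_assoc, Rinv_l by lra. lra. }
  lra.
Qed.

Lemma walk_prob_aux_nonneg d sg m p : 0 < d -> 0 <= walk_prob_aux d sg m p.
Proof.
  revert sg m; induction p; intros sg m Hd; simpl; [lra |].
  destruct (recross_prob_bounds d m Hd).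
  destruct Z.eqb; [apply Rmult_le_pos; auto |].
  destruct Z.eqb; [apply Rmult_le_pos; auto; lra | lra].
Qed.

Definition Ewalk (d : R) (n : nat) (sg : Z) (m : nat) (F : list Z -> R) : R :=
  sumR (map (fun p => walk_prob_aux d sg m p * F p) (all_paths n)).

Section WalkExpectation.
Variables (d : R) (n : nat) (sg : Z) (m : nat).

Lemma Ewalk_plus F G : Ewalk d n sg m (fun p => F p + G p) = Ewalk d n sg m F + Ewalk d n sg m G.
Proof. unfold Ewalk. rewrite <- sumR_map_plus. apply sumR_map_ext; intros; ring. Qed.

Lemma Ewalk_scal F c : Ewalk d n sg m (fun p => c * F p) = c * Ewalk d n sg m F.
Proof. unfold Ewalk. rewrite <- sumR_map_scal. apply sumR_map_ext; intros; ring. Qed.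

Lemma Ewalk_ext F G : (forall p, F p = G p) -> Ewalk d n sg m F = Ewalk d n sg m G.
Proof. intros H; unfold Ewalk; apply sumR_map_ext; intros; rewrite H; auto. Qed.

Lemma Ewalk_le F G : 0 < d -> (forall p, F p <= G p) -> Ewalk d n sg m F <= Ewalk d n sg m G.
Proof.
  intros Hd H; unfold Ewalk; apply sumR_map_le; intros.
  apply Rmult_le_compat_l; auto. apply walk_prob_aux_nonneg; auto.
Qed.

End WalkExpectation.

Lemma Ewalk_S d n sg m F : is_step sg ->
  Ewalk d (S n) sg m F =
    recross_prob d m * Ewalk d n (- sg) (S m) (fun p => F ((- sg)%Z :: p))
  + (1 - recross_prob d m) * Ewalk d n sg 1 (fun p => F (sg :: p)).
Proof.
  intros [-> | ->]; unfold Ewalk; simpl all_paths;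
    rewrite map_app, sumR_app, !map_map; simpl; rewrite <- !sumR_map_scal.
  - rewrite Rplus_comm. f_equal; apply sumR_map_ext; intros; ring.
  - f_equal; apply sumR_map_ext; intros; ring.
Qed.

Lemma Ewalk_const1 d n : forall sg m, is_step sg -> Ewalk d n sg m (fun _ => 1) = 1.
Proof.
  induction n; intros sg m Hs.
  - unfold Ewalk; simpl; ring.
  - rewrite Ewalk_S by auto.
    rewrite (IHn (- sg)%Z), (IHn sg) by (auto; destruct Hs; red; lia). ring.
Qed.

Lemma Ewalk_add_const d n sg m a F : is_step sg ->
  Ewalk d n sg m (fun p => a + F p) = a + Ewalk d n sg m F.
Proof.
  intros Hs. rewrite Ewalk_plus. f_equal.
  transitivity (a * Ewalk d n sg m (fun _ => 1)).
  - rewrite <- Ewalk_scal; apply Ewalk_ext; intros; ring.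
  - rewrite Ewalk_const1; auto; ring.
Qed.

Lemma Ewalk_abs_sub_le d n sg m F G H : 0 < d ->
  (forall p, Rabs (F p - G p) <= H p) ->
  Rabs (Ewalk d n sg m F - Ewalk d n sg m G) <= Ewalk d n sg m H.
Proof.
  intros Hd HFG.
  replace (Ewalk d n sg m F - Ewalk d n sg m G)
    with (Ewalk d n sg m (fun p => F p + -1 * G p)) by (rewrite Ewalk_plus, Ewalk_scal; ring).
  apply Rabs_le; split.
  - replace (- Ewalk d n sg m H) with (Ewalk d n sg m (fun p => -1 * H p))
      by (rewrite Ewalk_scal; ring).
    apply Ewalk_le; auto. intros p. specialize (HFG p). apply Rabs_le_between in HFG. lra.
  - apply Ewalk_le; auto. intros p. specialize (HFG p). apply Rabs_le_between in HFG. lra.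
Qed.

Lemma Series_nonneg (a : nat -> R) : (forall n, 0 <= a n) -> ex_series a -> 0 <= Series a.
Proof.
  intros. rewrite <- (Rmult_0_l (Series a)), <- Series_scal_l.
  apply Series_le; auto. intros n; specialize (H n); lra.
Qed.

Lemma ex_series_geom_bound (a : nat -> R) B x : 0 <= x < 1 ->
  (forall n, Rabs (a n) <= B * x ^ n) -> ex_series a /\ Rabs (Series a) <= B / (1 - x).
Proof.
  intros Hx Ha.
  assert (Hg : is_series (fun n => B * x ^ n) (B / (1 - x))).
  { apply (is_series_scal_l B (fun n => x ^ n)). apply is_series_geom. rewrite Rabs_right; lra. }
  assert (Habs : ex_series (fun n => Rabs (a n))).
  { apply (ex_series_le (fun n => Rabs (a n)) (fun n => B * x ^ n)); [| eexists; eauto].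
    intros n. change (Rabs (Rabs (a n)) <= B * x ^ n). rewrite Rabs_Rabsolu; auto. }
  split; [apply ex_series_Rabs; auto |].
  eapply Rle_trans; [apply Series_Rabs; auto |].
  rewrite <- (is_series_unique _ _ Hg). apply Series_le; [| eexists; eauto].
  intros; split; [apply Rabs_pos | auto].
Qed.

Lemma is_series_telescope (u : nat -> R) :
  is_lim_seq u 0 -> is_series (fun j => u j - u (S j)) (u 0%nat).
Proof.
  intros Hu. unfold is_series.
  change (is_lim_seq (sum_n (fun j => u j - u (S j))) (u 0%nat)).
  apply is_lim_seq_ext with (fun n => u 0%nat - u (S n)).
  { induction n; [rewrite sum_O; auto |].
    rewrite sum_Sn, <- IHn. change (plus ?a ?b) with (a + b). ring. }
  pose proof (is_lim_seq_minus' _ _ _ _ (is_lim_seq_const (u 0%nat))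
                (proj1 (is_lim_seq_incr_1 u 0) Hu)) as H.
  rewrite Rminus_0_r in H. exact H.
Qed.

Lemma ex_series_Rscal (c : R) (a : nat -> R) : ex_series a -> ex_series (fun n => c * a n).
Proof. apply (ex_series_scal_l c a). Qed.

Definition tail (a : nat -> R) (k : nat) : R := Series (fun i => a (k + i)%nat).

Lemma tail_S a k : ex_series (fun i => a (k + i)%nat) -> tail a k = a k + tail a (S k).
Proof.
  intros H. unfold tail. rewrite Series_incr_1 by auto. rewrite Nat.add_0_r. f_equal.
  apply Series_ext; intros; f_equal; lia.
Qed.

Lemma pow_m1 j : (-1) ^ j = if Nat.even j then 1 else -1.
Proof.
  induction j; [reflexivity |]. change ((-1) ^ S j) with (-1 * (-1) ^ j).
  rewrite Nat.even_succ, <- Nat.negb_even, IHj. destruct Nat.even; simpl; ring.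
Qed.

Lemma pow_m1_sq j : (-1) ^ j * (-1) ^ j = 1.
Proof. rewrite pow_m1; destruct Nat.even; ring. Qed.

Lemma Rabs_pow_m1_mul j x : Rabs ((-1) ^ j * x) = Rabs x.
Proof. rewrite Rabs_mult, pow_1_abs; ring. Qed.

Lemma Rabs_sq_sub_le e z B eps : Rabs (e - z) <= B -> 0 < eps ->
  Rabs (e ^ 2 - z ^ 2) <= eps * z ^ 2 + B ^ 2 * (1 + / eps).
Proof.
  intros H He. set (u := e - z). replace e with (z + u) by (unfold u; ring).
  assert (Hu : u ^ 2 <= B ^ 2) by (apply pow_maj_Rabs; auto).
  (* AM-GM: [2 |u z| <= eps z^2 + u^2 / eps] *)
  assert (H1 : 0 <= (eps * z - u) ^ 2 / eps) by (apply Rdiv_le_0_compat; [apply pow2_ge_0 | lra]).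
  assert (H2 : 0 <= (eps * z + u) ^ 2 / eps) by (apply Rdiv_le_0_compat; [apply pow2_ge_0 | lra]).
  replace ((eps * z - u) ^ 2 / eps) with (eps * z ^ 2 + u ^ 2 / eps - 2 * u * z) in H1
    by (field; lra).
  replace ((eps * z + u) ^ 2 / eps) with (eps * z ^ 2 + u ^ 2 / eps + 2 * u * z) in H2
    by (field; lra).
  assert (H3 : u ^ 2 / eps <= B ^ 2 / eps)
    by (apply Rmult_le_compat_r; [left; apply Rinv_0_lt_compat; lra | auto]).
  assert (0 <= u ^ 2) by apply pow2_ge_0.
  apply Rabs_le. unfold Rdiv in *. split; nra.
Qed.

Lemma Un_cv_div_INR (a : nat -> R) l :
  (forall eps, 0 < eps -> exists M, forall n,
     Rabs (a (S n) - INR (S n) * l) <= eps * INR (S n) + M) ->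
  Un_cv (fun n => a n / INR n) l.
Proof.
  intros Ha eta Heta. destruct (Ha (eta / 2)) as [M HM]; [lra |].
  destruct (nfloor_ex (Rabs (2 * M / eta))) as [N [_ HN]]; [apply Rabs_pos |].
  exists (S N). intros [| n] Hn; [lia |]. unfold R_dist.
  assert (Hpos : 0 < INR (S n)) by (apply lt_0_INR; lia).
  assert (HNn : INR N + 1 <= INR (S n)) by (rewrite <- S_INR; apply le_INR; lia).
  assert (HM' : M < eta / 2 * INR (S n)).
  { pose proof (Rle_abs (2 * M / eta)).
    apply Rmult_lt_reg_r with (2 / eta); [apply Rdiv_lt_0_compat; lra |].
    replace (eta / 2 * INR (S n) * (2 / eta)) with (INR (S n)) by (field; lra).
    replace (M * (2 / eta)) with (2 * M / eta) by (field; lra). lra. }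
  replace (a (S n) / INR (S n) - l) with ((a (S n) - INR (S n) * l) / INR (S n)) by (field; lra).
  rewrite Rabs_div, (Rabs_right (INR (S n))) by lra.
  apply Rmult_lt_reg_r with (INR (S n)); auto.
  unfold Rdiv; rewrite Rmult_assoc, Rinv_l, Rmult_1_r by lra.
  specialize (HM n). lra.
Qed.

Lemma is_lim_seq_S_mul_pow x : 0 < x < 1 -> is_lim_seq (fun n => INR (S n) * x ^ n) 0.
Proof.
  intros Hx. apply ex_series_lim_0, ex_series_Rabs.
  apply ex_series_DAlembert with x; [lra | |].
  - intros n. apply Rmult_integral_contrapositive.
    split; [apply not_0_INR; lia | apply pow_nonzero; lra].
  - apply is_lim_seq_ext with (fun n => (1 + / INR (S n)) * x).
    { intros n. assert (0 < INR (S n)) by (apply lt_0_INR; lia).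
      assert (0 < x ^ n) by (apply pow_lt; lra).
      rewrite (S_INR (S n)). change (x ^ S n) with (x * x ^ n).
      replace ((INR (S n) + 1) * (x * x ^ n) / (INR (S n) * x ^ n))
        with ((1 + / INR (S n)) * x) by (field; lra).
      pose proof (Rinv_0_lt_compat _ H). rewrite Rabs_right; [reflexivity | nra]. }
    assert (L : is_lim_seq (fun n => (1 + / INR (S n)) * x) ((1 + 0) * x)).
    { apply is_lim_seq_mult'; [| apply is_lim_seq_const].
      apply is_lim_seq_plus'; [apply is_lim_seq_const |].
      apply (is_lim_seq_inv (fun n => INR (S n)) p_infty); [| discriminate].
      apply (is_lim_seq_incr_1 INR p_infty), is_lim_seq_INR. }
    replace ((1 + 0) * x) with x in L by ring. exact L.
Qed.

(* After a step [sg], the first [j] steps of [p] recross the current edge and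
   the next one leaves it. *)
Fixpoint alt_then_exit (sg : Z) (j : nat) (p : list Z) : bool :=
  match j, p with
  | O, t :: _ => Z.eqb t sg
  | S j', t :: rest => Z.eqb t (- sg) && alt_then_exit t j' rest
  | _, [] => false
  end.

Lemma on_edge_step (on_edge : Z -> bool) x sg t :
  (forall z, on_edge z = true <-> z = x \/ z = (x - sg)%Z) -> is_step sg -> is_step t ->
  on_edge (x + t)%Z = Z.eqb t (- sg).
Proof.
  intros Ho Hs Ht. destruct (Z.eqb_spec t (- sg)).
  - apply Ho. right. lia.
  - destruct (on_edge (x + t)%Z) eqn:E; auto. apply Ho in E. destruct Hs, Ht; lia.
Qed.

Lemma tau_event_local j : forall (on_edge : Z -> bool) x sg p,
  (forall z, on_edge z = true <-> z = x \/ z = (x - sg)%Z) -> is_step sg ->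
  length p = S j -> Forall is_step p ->
  forallb on_edge (firstn j (positions x p)) && negb (on_edge (nth j (positions x p) 0%Z))
  = alt_then_exit sg j p.
Proof.
  induction j; intros on_edge x sg p Ho Hs Hl Hf; destruct p as [| t rest]; simpl in Hl;
    try lia; inversion Hf; subst; simpl; rewrite (on_edge_step on_edge x sg t Ho Hs H1).
  - destruct Hs as [-> | ->]; destruct H1 as [-> | ->]; reflexivity.
  - destruct (Z.eqb_spec t (- sg)); simpl; [| reflexivity].
    apply IHj; [intros z; rewrite Ho; lia | exact H1 | lia | exact H2].
Qed.

Lemma tau_event_cons j s rest : is_step s -> length rest = S j -> Forall is_step rest ->
  tau_event (S j) (s :: rest) = alt_then_exit s j rest.
Proof.
  intros Hs Hl Hf. unfold tau_event. simpl positions. simpl nth. simpl firstn.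
  simpl forallb. rewrite Z.eqb_refl, orb_true_r. simpl.
  apply tau_event_local; auto. intros z. rewrite orb_true_iff, !Z.eqb_eq. lia.
Qed.

Fixpoint recross_run (d : R) (m j : nat) : R :=
  match j with O => 1 | S j' => recross_prob d m * recross_run d (S m) j' end.

Lemma Ewalk_alt_then_exit d j : 0 < d -> forall sg m, is_step sg ->
  Ewalk d (S j) sg m (fun p => if alt_then_exit sg j p then 1 else 0)
  = recross_run d m j * (1 - recross_prob d (m + j)).
Proof.
  intros Hd; induction j; intros sg m Hs.
  - rewrite Ewalk_S by auto. unfold Ewalk; simpl. rewrite Nat.add_0_r.
    destruct Hs as [-> | ->]; simpl; ring.
  - rewrite Ewalk_S by auto. simpl alt_then_exit. rewrite Z.eqb_refl. simpl andb.
    replace (sg =? - sg)%Z with false by (symmetry; apply Z.eqb_neq; destruct Hs; lia).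
    rewrite IHj by (apply is_step_opp; auto).
    rewrite (Ewalk_ext _ _ _ _ _ (fun p => 0 * 1)) by (intros; simpl; ring).
    rewrite Ewalk_scal. simpl. rewrite Nat.add_succ_r. ring.
Qed.

Fixpoint psum (a : nat -> R) (N : nat) : R :=
  match N with O => 0 | S n => psum a n + a n end.

Lemma psum_le a b N : (forall j, (j < N)%nat -> a j <= b j) -> psum a N <= psum b N.
Proof.
  induction N; intros H; simpl; [lra |].
  assert (a N <= b N) by (apply H; lia).
  assert (psum a N <= psum b N) by (apply IHN; intros; apply H; lia). lra.
Qed.

Lemma psum_scal a k N : psum (fun j => k * a j) N = k * psum a N.
Proof. induction N; simpl; [ring | rewrite IHN; ring]. Qed.

Lemma pow_le_1 x n : 0 <= x <= 1 -> x ^ n <= 1.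
Proof. intros Hx. rewrite <- (pow1 n). apply pow_incr. lra. Qed.

Lemma pow_le_pow_antitone y j N : 0 <= y <= 1 -> (j <= N)%nat -> y ^ N <= y ^ j.
Proof.
  intros Hy HjN. replace N with (j + (N - j))%nat by lia. rewrite pow_add.
  pose proof (pow_le_1 y (N - j) Hy). assert (0 <= y ^ j) by (apply pow_le; lra).
  assert (0 <= y ^ (N - j)) by (apply pow_le; lra). nra.
Qed.

Lemma Bernoulli_ineq a N : 0 <= a <= 1 -> 1 - INR N * a <= (1 - a) ^ N.
Proof.
  intros Ha; induction N; [simpl; lra |]. rewrite S_INR.
  change ((1 - a) ^ S N) with ((1 - a) * (1 - a) ^ N). pose proof (pos_INR N). nra.
Qed.

Lemma ln_1_plus_ge y : 0 < y -> y / (1 + y) <= ln (1 + y).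
Proof.
  intros Hy. pose proof (exp_ineq1_le (- (y / (1 + y)))) as H.
  replace (1 + - (y / (1 + y))) with (/ (1 + y)) in H by (field; lra).
  apply ln_le in H; [| apply Rinv_0_lt_compat; lra].
  rewrite ln_exp, ln_Rinv in H by lra. lra.
Qed.

Lemma ln_1_plus_le y : 0 < y -> ln (1 + y) <= y.
Proof. intros Hy. pose proof (exp_ineq1_le y). apply ln_le in H; [| lra]. rewrite ln_exp in H. auto. Qed.

Lemma psum_harmonic_le N : psum (fun j => / (INR j + 2)) N <= ln (INR N + 1).
Proof.
  induction N; simpl psum.
  - simpl. rewrite Rplus_0_l, ln_1. lra.
  - rewrite S_INR. pose proof (pos_INR N).
    pose proof (ln_1_plus_ge (/ (INR N + 1)) ltac:(apply Rinv_0_lt_compat; lra)).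
    replace (/ (INR N + 1) / (1 + / (INR N + 1))) with (/ (INR N + 2)) in H0 by (field; lra).
    replace (INR N + 1 + 1) with ((INR N + 1) * (1 + / (INR N + 1))) by (field; lra).
    pose proof (Rinv_0_lt_compat (INR N + 1)). rewrite ln_mult; lra.
Qed.

Lemma psum_harmonic_ge N : ln (INR N + 2) - ln 2 <= psum (fun j => / (INR j + 2)) N.
Proof.
  induction N; simpl psum.
  - simpl. rewrite Rplus_0_l. lra.
  - rewrite S_INR. pose proof (pos_INR N).
    pose proof (ln_1_plus_le (/ (INR N + 2)) ltac:(apply Rinv_0_lt_compat; lra)).
    replace (INR N + 1 + 2) with ((INR N + 2) * (1 + / (INR N + 2))) by (field; lra).
    pose proof (Rinv_0_lt_compat (INR N + 2)). rewrite ln_mult; lra.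
Qed.

Lemma ln_100_bounds : 4 <= ln 100 /\ 2 * ln 6 <= ln 100.
Proof.
  split.
  - assert (exp 4 <= 100).
    { replace 4 with (1 + 1 + (1 + 1)) by ring. rewrite !exp_plus.
      pose proof exp_le_3. pose proof (exp_pos 1).
      assert (exp 1 * exp 1 <= 3 * 3) by (apply Rmult_le_compat; lra).
      assert (exp 1 * exp 1 * (exp 1 * exp 1) <= 9 * 9)
        by (apply Rmult_le_compat; try lra; apply Rmult_le_pos; lra).
      lra. }
    rewrite <- (ln_exp 4). apply ln_le; [apply exp_pos | auto].
  - replace (2 * ln 6) with (ln 6 + ln 6) by ring. rewrite <- ln_mult by lra. apply ln_le; lra.
Qed.

(** * The law of tau *)

Lemma ratio_bounds k : 2/3 <= (2 + INR k) / (3 + INR k) < 1.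
Proof.
  assert (0 <= INR k) by apply pos_INR.
  replace ((2 + INR k) / (3 + INR k)) with (1 - / (3 + INR k)) by (field; lra).
  assert (0 < / (3 + INR k)) by (apply Rinv_0_lt_compat; lra).
  assert (/ (3 + INR k) <= / 3) by (apply Rinv_le_contravar; lra). lra.
Qed.

Section Delta.
Variable d : R.
Hypothesis Hd : 0 < d < 2/3.

Definition recross (k : nat) : R := recross_prob d (S k).

(* [survival k] will turn out to be P(tau > k). *)
Fixpoint survival (k : nat) : R :=
  match k with O => 1 | S k' => survival k' * recross k' end.

Definition exit_prob (j : nat) : R := survival j - survival (S j).

(* The index is shifted: [exit_prob j] is P(tau = j + 1). *)
Definition odd_tau_term (j : nat) : R := if Nat.even j then exit_prob j else 0.
Definition even_tau_term (j : nat) : R := if Nat.odd j then exit_prob j else 0.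

Definition prob_tau_odd : R := Series odd_tau_term.
Definition prob_tau_even : R := Series even_tau_term.
Definition tau_mean : R := Series survival.




Lemma recross_val k : recross k = (2 + INR k) / (3 + INR k) - d.
Proof.
  unfold recross, recross_prob. rewrite S_INR.
  replace (1 + (INR k + 1)) with (2 + INR k) by ring.
  replace (2 + (INR k + 1)) with (3 + INR k) by ring.
  pose proof (ratio_bounds k). unfold Rmax; destruct Rle_dec; lra.
Qed.

Lemma recross_bounds k : 0 < recross k <= 1 - d.
Proof. rewrite recross_val. pose proof (ratio_bounds k). lra. Qed.

Lemma survival_pos k : 0 < survival k.
Proof.
  induction k; simpl; [lra |].
  apply Rmult_lt_0_compat; auto. apply recross_bounds.
Qed.

Lemma survival_add_le k i : survival (k + i) <= survival k * (1 - d) ^ i.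
Proof.
  induction i; [rewrite Nat.add_0_r; simpl; lra |].
  rewrite Nat.add_succ_r; simpl.
  pose proof (recross_bounds (k + i)). pose proof (survival_pos (k + i)).
  apply Rle_trans with (survival k * (1 - d) ^ i * (1 - d)); [apply Rmult_le_compat; lra | lra].
Qed.

Lemma survival_le_geom k : survival k <= (1 - d) ^ k.
Proof. pose proof (survival_add_le 0 k). simpl in H. lra. Qed.

Lemma survival_S_le k : survival (S k) <= survival k.
Proof. simpl. pose proof (recross_bounds k). pose proof (survival_pos k). nra. Qed.

Lemma survival_lim : is_lim_seq survival 0.
Proof.
  apply is_lim_seq_le_le with (fun _ => 0) (fun n => (1 - d) ^ n).
  - intros; split; [left; apply survival_pos | apply survival_le_geom].
  - apply is_lim_seq_const.
  - apply is_lim_seq_geom. rewrite Rabs_right; lra.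
Qed.

Lemma exit_prob_bounds j : 0 <= exit_prob j <= survival j.
Proof.
  unfold exit_prob. pose proof (survival_S_le j). pose proof (survival_pos (S j)). lra.
Qed.

Lemma tail_dominated (a : nat -> R) C k : (forall n, Rabs (a n) <= C * survival n) ->
  ex_series (fun i => a (k + i)%nat) /\ Rabs (tail a k) <= C * survival k / d.
Proof.
  intros Ha. assert (HC : 0 <= C).
  { specialize (Ha 0%nat). simpl in Ha. pose proof (Rabs_pos (a 0%nat)). lra. }
  destruct (ex_series_geom_bound (fun i => a (k + i)%nat) (C * survival k) (1 - d))
    as [H1 H2]; [lra | |].
  - intros n. eapply Rle_trans; [apply Ha |]. rewrite Rmult_assoc.
    apply Rmult_le_compat_l; auto. apply survival_add_le.
  - split; auto. replace (1 - (1 - d)) with d in H2 by ring. auto.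
Qed.

Lemma ex_series_dominated (a : nat -> R) C :
  (forall n, Rabs (a n) <= C * survival n) -> ex_series a.
Proof. intros Ha. exact (proj1 (tail_dominated a C 0 Ha)). Qed.

Lemma ex_series_bounded_by_survival (a : nat -> R) :
  (forall n, 0 <= a n <= survival n) -> ex_series a.
Proof.
  intros Ha. apply (ex_series_dominated a 1). intros n.
  destruct (Ha n). rewrite Rabs_right; lra.
Qed.

Lemma ex_series_survival : ex_series survival.
Proof. apply ex_series_bounded_by_survival. intros n. pose proof (survival_pos n). lra. Qed.

Lemma ex_series_survival_S : ex_series (fun j => survival (S j)).
Proof. apply (proj1 (ex_series_incr_1 survival)), ex_series_survival. Qed.

Lemma ex_series_exit_prob : ex_series exit_prob.
Proof. apply ex_series_bounded_by_survival, exit_prob_bounds. Qed.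

Lemma ex_series_odd_tau : ex_series odd_tau_term.
Proof.
  apply ex_series_bounded_by_survival. intros n; unfold odd_tau_term.
  destruct (exit_prob_bounds n). pose proof (survival_pos n). destruct Nat.even; lra.
Qed.

Lemma ex_series_even_tau : ex_series even_tau_term.
Proof.
  apply ex_series_bounded_by_survival. intros n; unfold even_tau_term.
  destruct (exit_prob_bounds n). pose proof (survival_pos n). destruct Nat.odd; lra.
Qed.

Lemma Series_exit_prob : Series exit_prob = 1.
Proof. apply is_series_unique, (is_series_telescope survival), survival_lim. Qed.

Lemma prob_tau_odd_even : prob_tau_odd + prob_tau_even = 1.
Proof.
  unfold prob_tau_odd, prob_tau_even.
  rewrite <- Series_plus by (apply ex_series_odd_tau || apply ex_series_even_tau).
  rewrite <- Series_exit_prob. apply Series_ext. intros n.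
  unfold odd_tau_term, even_tau_term. rewrite <- Nat.negb_even.
  destruct Nat.even; simpl; ring.
Qed.

Lemma recross_0 : recross 0 = 2/3 - d.
Proof. rewrite recross_val; simpl; field. Qed.

Lemma recross_1 : recross 1 = 3/4 - d.
Proof. rewrite recross_val; simpl; field. Qed.

Lemma prob_tau_odd_lower : 1/3 + d <= prob_tau_odd.
Proof.
  unfold prob_tau_odd. rewrite Series_incr_1 by apply ex_series_odd_tau.
  assert (0 <= Series (fun k => odd_tau_term (S k))).
  { apply Series_nonneg.
    - intros n; unfold odd_tau_term; destruct Nat.even; [apply exit_prob_bounds | lra].
    - apply (proj1 (ex_series_incr_1 odd_tau_term)), ex_series_odd_tau. }
  unfold odd_tau_term at 1, exit_prob; simpl. rewrite recross_0. lra.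
Qed.

Lemma prob_tau_even_lower : (2/3 - d) * (1/4 + d) <= prob_tau_even.
Proof.
  pose proof ex_series_even_tau as Hex.
  pose proof (proj1 (ex_series_incr_1 _) Hex) as Hex1.
  pose proof (proj1 (ex_series_incr_1 _) Hex1) as Hex2.
  unfold prob_tau_even. rewrite (Series_incr_1 _ Hex), (Series_incr_1 _ Hex1).
  assert (0 <= Series (fun k => even_tau_term (S (S k)))).
  { apply Series_nonneg; auto.
    intros n; unfold even_tau_term; destruct Nat.odd; [apply exit_prob_bounds | lra]. }
  unfold even_tau_term at 1 2, exit_prob; simpl. rewrite recross_0, recross_1. lra.
Qed.

Lemma prob_tau_odd_pos : 0 < prob_tau_odd.
Proof. pose proof prob_tau_odd_lower. lra. Qed.

Lemma prob_tau_even_pos : 0 < prob_tau_even.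
Proof. pose proof prob_tau_even_lower. nra. Qed.

Lemma tau_mean_ge1 : 1 <= tau_mean.
Proof.
  unfold tau_mean. rewrite Series_incr_1 by apply ex_series_survival.
  assert (0 <= Series (fun k => survival (S k))).
  { apply Series_nonneg; [intros; left; apply survival_pos | apply ex_series_survival_S]. }
  change (survival 0) with 1. lra.
Qed.

Lemma ex_series_alt_survival : ex_series (fun j => (-1) ^ j * survival j).
Proof.
  apply (ex_series_dominated _ 1). intros n. rewrite Rabs_pow_m1_mul.
  pose proof (survival_pos n). rewrite Rabs_right; lra.
Qed.

Lemma ex_series_alt_survival_S : ex_series (fun j => (-1) ^ j * survival (S j)).
Proof.
  apply (ex_series_dominated _ 1). intros n. rewrite Rabs_pow_m1_mul.
  pose proof (survival_pos (S n)). pose proof (survival_S_le n). rewrite Rabs_right; lra.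
Qed.

Lemma ex_series_alt_exit_prob : ex_series (fun j => (-1) ^ j * exit_prob j).
Proof.
  apply (ex_series_dominated _ 1). intros n. rewrite Rabs_pow_m1_mul.
  destruct (exit_prob_bounds n). rewrite Rabs_right; lra.
Qed.

Lemma Series_alt_exit_prob :
  Series (fun j => (-1) ^ j * exit_prob j) = prob_tau_odd - prob_tau_even.
Proof.
  unfold prob_tau_odd, prob_tau_even.
  rewrite <- Series_minus by (apply ex_series_odd_tau || apply ex_series_even_tau).
  apply Series_ext. intros n; unfold odd_tau_term, even_tau_term.
  rewrite pow_m1, <- Nat.negb_even. destruct Nat.even; simpl; ring.
Qed.

(* With A the alternating sum of survival (S j): the alternating sum of
   survival j is 1 - A, hence that of exit_prob is 1 - 2A. *)
Lemma Series_alt_survival_S :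
  Series (fun j => (-1) ^ j * survival (S j)) = prob_tau_even.
Proof.
  set (A := Series (fun j => (-1) ^ j * survival (S j))).
  assert (HX : Series (fun j => (-1) ^ j * survival j) = 1 - A).
  { rewrite Series_incr_1 by apply ex_series_alt_survival. simpl.
    replace (Series (fun k => -1 * (-1) ^ k * (survival k * recross k))) with (- A); [ring |].
    unfold A. rewrite <- Series_opp. apply Series_ext; intros; simpl; ring. }
  assert (HF : Series (fun j => (-1) ^ j * exit_prob j) = (1 - A) - A).
  { rewrite <- HX. unfold A.
    rewrite <- Series_minus by (apply ex_series_alt_survival || apply ex_series_alt_survival_S).
    apply Series_ext; intros; unfold exit_prob; ring. }
  rewrite Series_alt_exit_prob in HF. pose proof prob_tau_odd_even. lra.
Qed.


(** * The position corrector *)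

(* The corrector [g] solves [g k = r_k (-1 - g (k+1)) + (1 - r_k) (1 + g 0)]
   with [r_k = recross k] (lemma [pos_corr_eq]).  Its weighted version
   [G k = survival k * g k] satisfies [G k + G (k+1) = corr_source k], whose
   decaying solution is the alternating tail sum below; [corr_base] is the
   value of [1 + g 0] for which this solution is consistent at [k = 0]. *)
Definition corr_base : R := prob_tau_odd / (2 * prob_tau_even).
Definition corr_source (j : nat) : R := exit_prob j * corr_base - survival (S j).
Definition alt_corr_source (j : nat) : R := (-1) ^ j * corr_source j.
Definition pos_corr_weighted (k : nat) : R := (-1) ^ k * tail alt_corr_source k.
Definition pos_corr (k : nat) : R := pos_corr_weighted k / survival k.
Definition pos_corr_bound : R := (corr_base + 1) / d.

Lemma corr_base_nonneg : 0 <= corr_base.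
Proof.
  unfold corr_base. pose proof prob_tau_odd_pos. pose proof prob_tau_even_pos.
  apply Rle_mult_inv_pos; lra.
Qed.

Lemma alt_corr_source_bound j : Rabs (alt_corr_source j) <= (corr_base + 1) * survival j.
Proof.
  unfold alt_corr_source, corr_source. rewrite Rabs_pow_m1_mul.
  pose proof (exit_prob_bounds j). pose proof corr_base_nonneg.
  pose proof (survival_S_le j). pose proof (survival_pos (S j)).
  apply Rabs_le. split; nra.
Qed.

Lemma pos_corr_weighted_S k :
  pos_corr_weighted k + pos_corr_weighted (S k) = corr_source k.
Proof.
  unfold pos_corr_weighted.
  destruct (tail_dominated _ _ k alt_corr_source_bound) as [Hex _].
  rewrite (tail_S _ _ Hex). unfold alt_corr_source. simpl.
  transitivity ((-1) ^ k * (-1) ^ k * corr_source k); [ring |].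
  rewrite pow_m1_sq; ring.
Qed.

Lemma pos_corr_weighted_bound k : Rabs (pos_corr_weighted k) <= pos_corr_bound * survival k.
Proof.
  unfold pos_corr_weighted. rewrite Rabs_pow_m1_mul.
  destruct (tail_dominated _ _ k alt_corr_source_bound) as [_ H].
  eapply Rle_trans; [apply H |]. unfold pos_corr_bound. right; field. lra.
Qed.

Lemma pos_corr_weighted_0 : pos_corr_weighted 0 = corr_base - 1.
Proof.
  unfold pos_corr_weighted, tail. rewrite pow_O, Rmult_1_l.
  change (Series (fun i => alt_corr_source (0 + i))) with (Series alt_corr_source).
  assert (Hs : Series alt_corr_source
               = corr_base * (prob_tau_odd - prob_tau_even) - prob_tau_even).
  { rewrite <- Series_alt_exit_prob, <- Series_alt_survival_S, <- Series_scal_l.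
    rewrite <- Series_minus.
    - apply Series_ext; intros; unfold alt_corr_source, corr_source; ring.
    - apply (ex_series_Rscal corr_base), ex_series_alt_exit_prob.
    - apply ex_series_alt_survival_S. }
  rewrite Hs. unfold corr_base. pose proof prob_tau_even_pos. pose proof prob_tau_odd_even.
  replace prob_tau_odd with (1 - prob_tau_even) by lra. field. lra.
Qed.

Lemma pos_corr_bounded k : Rabs (pos_corr k) <= pos_corr_bound.
Proof.
  unfold pos_corr. pose proof (survival_pos k).
  unfold Rdiv at 1. rewrite Rabs_mult, Rabs_inv, (Rabs_right (survival k)) by lra.
  apply Rmult_le_reg_r with (survival k); auto.
  rewrite Rmult_assoc, Rinv_l, Rmult_1_r by lra. apply pos_corr_weighted_bound.
Qed.

Lemma pos_corr_eq k :
  pos_corr k = recross k * (-1 - pos_corr (S k)) + (1 - recross k) * (1 + pos_corr 0).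
Proof.
  unfold pos_corr. simpl survival. rewrite pos_corr_weighted_0.
  pose proof (pos_corr_weighted_S k) as H. unfold corr_source, exit_prob in H. simpl survival in H.
  replace (pos_corr_weighted k) with
    (survival k * corr_base - survival k * recross k * corr_base - survival k * recross k
     - pos_corr_weighted (S k)) by lra.
  pose proof (survival_pos k). pose proof (recross_bounds k). field. lra.
Qed.

Lemma ex_series_pos_corr_weighted : ex_series pos_corr_weighted.
Proof. apply (ex_series_dominated _ pos_corr_bound), pos_corr_weighted_bound. Qed.

Lemma Series_pos_corr_weighted : 2 * Series pos_corr_weighted = 2 * corr_base - tau_mean.
Proof.
  pose proof ex_series_pos_corr_weighted as Hex.
  assert (H1 : Series (fun k => pos_corr_weighted k + pos_corr_weighted (S k))
               = Series corr_source).
  { apply Series_ext; intros; apply pos_corr_weighted_S. }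
  rewrite Series_plus in H1 by (auto; apply (proj1 (ex_series_incr_1 _)), Hex).
  assert (H2 := Series_incr_1 _ Hex). rewrite pos_corr_weighted_0 in H2.
  assert (H3 : Series corr_source = corr_base - (tau_mean - 1)).
  { unfold corr_source.
    transitivity (Series (fun j => corr_base * exit_prob j) - Series (fun j => survival (S j))).
    - rewrite <- Series_minus.
      + apply Series_ext; intros; ring.
      + apply (ex_series_Rscal corr_base), ex_series_exit_prob.
      + apply ex_series_survival_S.
    - rewrite Series_scal_l, Series_exit_prob. unfold tau_mean.
      rewrite (Series_incr_1 survival) by apply ex_series_survival.
      change (survival 0) with 1. ring. }
  lra.
Qed.

(** * The Poisson corrector *)

Definition nu : R := prob_tau_odd / (prob_tau_even * tau_mean).

(* [sq_incr k] is the conditional mean increment of the squared corrected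
   position in state [k]; [nu] is its mean under the stationary law. *)
Definition sq_incr (k : nat) : R := 1 + 2 * pos_corr k.
Definition poisson_source (j : nat) : R := survival j * (sq_incr j - nu).
Definition poisson_corr (k : nat) : R := tail poisson_source k / survival k.
Definition poisson_corr_bound : R := (1 + 2 * pos_corr_bound + nu) / d.

Lemma nu_pos : 0 < nu.
Proof.
  unfold nu. pose proof prob_tau_odd_pos. pose proof prob_tau_even_pos.
  pose proof tau_mean_ge1. apply Rdiv_lt_0_compat; nra.
Qed.

Lemma poisson_source_bound j :
  Rabs (poisson_source j) <= (1 + 2 * pos_corr_bound + nu) * survival j.
Proof.
  unfold poisson_source, sq_incr. pose proof (survival_pos j).
  pose proof (pos_corr_bounded j). pose proof nu_pos.
  rewrite Rabs_mult, Rabs_right, Rmult_comm by lra. apply Rmult_le_compat_r; [lra |].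
  apply Rabs_le. apply Rabs_le_between in H0. lra.
Qed.

Lemma Series_poisson_source : Series poisson_source = 0.
Proof.
  transitivity (Series (fun j => (1 - nu) * survival j + 2 * pos_corr_weighted j)).
  { apply Series_ext; intros j. unfold poisson_source, sq_incr, pos_corr.
    pose proof (survival_pos j). field. lra. }
  rewrite Series_plus, !Series_scal_l.
  - pose proof Series_pos_corr_weighted. fold tau_mean.
    pose proof prob_tau_even_pos. pose proof tau_mean_ge1.
    replace (2 * Series pos_corr_weighted) with (2 * corr_base - tau_mean) by lra.
    unfold nu, corr_base. field. lra.
  - apply (ex_series_Rscal (1 - nu)), ex_series_survival.
  - apply (ex_series_Rscal 2), ex_series_pos_corr_weighted.
Qed.

Lemma poisson_corr_bounded k : Rabs (poisson_corr k) <= poisson_corr_bound.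
Proof.
  unfold poisson_corr.
  destruct (tail_dominated _ _ k poisson_source_bound) as [_ H].
  pose proof (survival_pos k).
  unfold Rdiv at 1. rewrite Rabs_mult, Rabs_inv, (Rabs_right (survival k)) by lra.
  apply Rmult_le_reg_r with (survival k); auto.
  rewrite Rmult_assoc, Rinv_l, Rmult_1_r by lra.
  eapply Rle_trans; [apply H |]. unfold poisson_corr_bound. right; field. lra.
Qed.

Lemma poisson_corr_0 : poisson_corr 0 = 0.
Proof.
  unfold poisson_corr, tail.
  change (Series (fun i => poisson_source (0 + i))) with (Series poisson_source).
  rewrite Series_poisson_source. unfold Rdiv; ring.
Qed.

Lemma poisson_corr_eq k :
  poisson_corr k - (recross k * poisson_corr (S k) + (1 - recross k) * poisson_corr 0)
  = sq_incr k - nu.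
Proof.
  rewrite poisson_corr_0. unfold poisson_corr.
  destruct (tail_dominated _ _ k poisson_source_bound) as [Hex _].
  rewrite (tail_S _ _ Hex). simpl survival. unfold poisson_source.
  pose proof (survival_pos k). pose proof (recross_bounds k). field. lra.
Qed.

(* States of the chain are traversal counts [m >= 1]; [pred m] is the
   corresponding index of [survival]. *)
Definition corr_at (m : nat) : R := pos_corr (pred m).
Definition sq_incr_at (m : nat) : R := sq_incr (pred m).
Definition poisson_corr_at (m : nat) : R := poisson_corr (pred m).
Definition poisson_mean (m : nat) : R :=
  recross_prob d m * poisson_corr_at (S m) + (1 - recross_prob d m) * poisson_corr_at 1.

(* S_n + (last step) * g(m_n) after the steps [p], from position 0 and
   state ([sg], [m]). *)
Fixpoint corrected_end (sg : Z) (m : nat) (p : list Z) : R :=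
  match p with
  | [] => IZR (Z.sgn sg) * corr_at m
  | s :: rest => IZR s + corrected_end s (if Z.eqb s (- sg) then S m else 1%nat) rest
  end.

Lemma corrected_end_recross sg m p : is_step sg ->
  corrected_end sg m ((- sg)%Z :: p) = IZR (- sg) + corrected_end (- sg) (S m) p.
Proof. intros; simpl. rewrite Z.eqb_refl. reflexivity. Qed.

Lemma corrected_end_continue sg m p : is_step sg ->
  corrected_end sg m (sg :: p) = IZR sg + corrected_end sg 1 p.
Proof. intros [-> | ->]; reflexivity. Qed.

Lemma corr_at_eq m : (1 <= m)%nat ->
  corr_at m = recross_prob d m * (-1 - corr_at (S m))
            + (1 - recross_prob d m) * (1 + corr_at 1).
Proof. intros Hm. destruct m; [lia |]. apply pos_corr_eq. Qed.

Lemma Ewalk_corrected_end n : forall sg m, is_step sg -> (1 <= m)%nat ->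
  Ewalk d n sg m (corrected_end sg m) = IZR sg * corr_at m.
Proof.
  induction n; intros sg m Hs Hm.
  - unfold Ewalk; simpl. destruct Hs as [-> | ->]; simpl; ring.
  - pose proof (is_step_opp sg Hs).
    rewrite Ewalk_S by auto.
    rewrite (Ewalk_ext _ _ _ _ _ _ (fun p => corrected_end_recross sg m p Hs)).
    rewrite (Ewalk_ext _ _ _ _ _ _ (fun p => corrected_end_continue sg m p Hs)).
    rewrite !Ewalk_add_const, !IHn by (auto; lia).
    rewrite (corr_at_eq m Hm), opp_IZR. ring.
Qed.

Lemma step_add_sq s z : is_step s -> (IZR s + z) ^ 2 = 1 + (2 * IZR s * z + z ^ 2).
Proof. intros Hs. pose proof (IZR_step_sq s Hs). simpl. nra. Qed.

Fixpoint sq_mean (n m : nat) : R :=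
  match n with
  | O => corr_at m ^ 2
  | S n' => recross_prob d m * (sq_incr_at (S m) + sq_mean n' (S m))
          + (1 - recross_prob d m) * (sq_incr_at 1 + sq_mean n' 1)
  end.

Lemma Ewalk_corrected_end_sq n : forall sg m, is_step sg -> (1 <= m)%nat ->
  Ewalk d n sg m (fun p => corrected_end sg m p ^ 2) = sq_mean n m.
Proof.
  induction n; intros sg m Hs Hm.
  - unfold Ewalk; simpl. destruct Hs as [-> | ->]; simpl; ring.
  - pose proof (is_step_opp sg Hs) as Hs'.
    rewrite Ewalk_S by auto.
    rewrite (Ewalk_ext d n (- sg) (S m) _ (fun p => 1 + (2 * IZR (- sg) * corrected_end (- sg) (S m) p
                                               + corrected_end (- sg) (S m) p ^ 2)))
      by (intros; rewrite corrected_end_recross by auto; apply step_add_sq; auto).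
    rewrite (Ewalk_ext d n sg 1 _ (fun p => 1 + (2 * IZR sg * corrected_end sg 1 p
                                               + corrected_end sg 1 p ^ 2)))
      by (intros; rewrite corrected_end_continue by auto; apply step_add_sq; auto).
    rewrite !Ewalk_add_const, !Ewalk_plus, !Ewalk_scal by auto.
    rewrite !Ewalk_corrected_end, !IHn by (auto; lia).
    simpl. unfold sq_incr_at, sq_incr, corr_at; simpl pred. rewrite opp_IZR.
    replace (2 * - IZR sg * (- IZR sg * pos_corr m)) with (2 * pos_corr m * (IZR sg * IZR sg))
      by ring.
    replace (2 * IZR sg * (IZR sg * pos_corr 0)) with (2 * pos_corr 0 * (IZR sg * IZR sg))
      by ring.
    rewrite IZR_step_sq by auto. ring.
Qed.

Lemma poisson_mean_eq m : (1 <= m)%nat ->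
  sq_incr_at m - nu - poisson_corr_at m = - poisson_mean m.
Proof.
  intros Hm. destruct m; [lia |].
  pose proof (poisson_corr_eq m). unfold poisson_mean, sq_incr_at, poisson_corr_at. simpl pred.
  fold (recross m). lra.
Qed.

Lemma poisson_mean_bound m : Rabs (poisson_mean m) <= poisson_corr_bound.
Proof.
  unfold poisson_mean, poisson_corr_at. simpl pred.
  pose proof (poisson_corr_bounded m). pose proof (poisson_corr_bounded 0).
  pose proof (recross_prob_bounds d m (proj1 Hd)).
  apply Rabs_le. apply Rabs_le_between in H. apply Rabs_le_between in H0. nra.
Qed.

Definition sq_mean_bound : R := pos_corr_bound ^ 2 + poisson_corr_bound.

Lemma sq_mean_linear n : forall m, (1 <= m)%nat ->
  Rabs (sq_mean n m - INR n * nu - poisson_mean m) <= sq_mean_bound.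
Proof.
  induction n; intros m Hm.
  - simpl sq_mean. unfold sq_mean_bound.
    pose proof (poisson_mean_bound m).
    pose proof (pow_maj_Rabs _ _ 2 (pos_corr_bounded (pred m))).
    pose proof (pow2_ge_0 (corr_at m)). unfold corr_at in *.
    apply Rabs_le. apply Rabs_le_between in H. simpl INR. lra.
  - pose proof (poisson_mean_eq (S m) ltac:(lia)). pose proof (poisson_mean_eq 1 ltac:(lia)).
    pose proof (IHn (S m) ltac:(lia)). pose proof (IHn 1%nat ltac:(lia)).
    pose proof (recross_prob_bounds d m (proj1 Hd)).
    assert (E : sq_mean (S n) m - INR (S n) * nu - poisson_mean m =
      recross_prob d m * (sq_mean n (S m) - INR n * nu - poisson_mean (S m))
      + (1 - recross_prob d m) * (sq_mean n 1 - INR n * nu - poisson_mean 1)).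
    { simpl sq_mean. rewrite S_INR. unfold poisson_mean at 1.
      replace (sq_incr_at (S m)) with (nu + poisson_corr_at (S m) - poisson_mean (S m)) by lra.
      replace (sq_incr_at 1) with (nu + poisson_corr_at 1 - poisson_mean 1) by lra. ring. }
    rewrite E.
    apply Rabs_le_between in H1. apply Rabs_le_between in H2. apply Rabs_le. nra.
Qed.

Lemma corrected_end_close p : forall sg m,
  Rabs (corrected_end sg m p - IZR (endpoint p)) <= pos_corr_bound.
Proof.
  induction p as [| s rest IH]; intros sg m.
  - simpl. rewrite Rminus_0_r, Rabs_mult.
    pose proof (pos_corr_bounded (pred m)). pose proof (Rabs_pos (corr_at m)).
    assert (Rabs (IZR (Z.sgn sg)) <= 1)
      by (destruct sg; simpl; rewrite ?Rabs_R0, ?Rabs_R1, ?Rabs_m1; lra).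
    unfold corr_at in *. pose proof (Rabs_pos (IZR (Z.sgn sg))). nra.
  - unfold endpoint in *. simpl. rewrite plus_IZR.
    replace (IZR s + corrected_end s _ rest - (IZR s + IZR (fold_right Z.add 0%Z rest)))
      with (corrected_end s (if (s =? - sg)%Z then S m else 1%nat) rest
            - IZR (fold_right Z.add 0%Z rest)) by ring.
    apply IH.
Qed.

Lemma ES2_S n : ES2 d (S n) =
  / 2 * Ewalk d n 1 1 (fun p => IZR (endpoint (1%Z :: p)) ^ 2) +
  / 2 * Ewalk d n (-1) 1 (fun p => IZR (endpoint ((-1)%Z :: p)) ^ 2).
Proof.
  unfold ES2, Ewalk. simpl all_paths. rewrite map_app, sumR_app, !map_map, <- !sumR_map_scal.
  f_equal; apply sumR_map_ext; intros; simpl; ring.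
Qed.

Definition start_sq_mean (n : nat) : R := sq_incr_at 1 + sq_mean n 1.

Lemma Ewalk_start_sq n s : is_step s ->
  Ewalk d n s 1 (fun p => (IZR s + corrected_end s 1 p) ^ 2) = start_sq_mean n.
Proof.
  intros Hs.
  rewrite (Ewalk_ext _ _ _ _ _ (fun p => 1 + (2 * IZR s * corrected_end s 1 p
                                             + corrected_end s 1 p ^ 2)))
    by (intros; apply step_add_sq; auto).
  rewrite Ewalk_add_const, Ewalk_plus, Ewalk_scal by auto.
  rewrite Ewalk_corrected_end, Ewalk_corrected_end_sq by (auto; lia).
  unfold start_sq_mean, sq_incr_at, sq_incr, corr_at. simpl pred.
  replace (2 * IZR s * (IZR s * pos_corr 0)) with (2 * pos_corr 0 * (IZR s * IZR s)) by ring.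
  rewrite IZR_step_sq by auto. ring.
Qed.

Lemma ES2_S_close n eps : 0 < eps ->
  Rabs (ES2 d (S n) - start_sq_mean n)
  <= eps * start_sq_mean n + pos_corr_bound ^ 2 * (1 + / eps).
Proof.
  intros He. set (K := pos_corr_bound ^ 2 * (1 + / eps)).
  assert (Hs : forall s, is_step s ->
    Rabs (Ewalk d n s 1 (fun p => IZR (endpoint (s :: p)) ^ 2) - start_sq_mean n)
    <= eps * start_sq_mean n + K).
  { intros s Hs. rewrite <- (Ewalk_start_sq n s Hs).
    eapply Rle_trans.
    - apply (Ewalk_abs_sub_le _ _ _ _ _ _
               (fun p => K + eps * (IZR s + corrected_end s 1 p) ^ 2)); [lra |].
      intros p. eapply Rle_trans; [apply (Rabs_sq_sub_le _ _ pos_corr_bound eps); auto | unfold K; lra].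
      unfold endpoint; simpl; rewrite plus_IZR.
      replace (IZR s + IZR (fold_right Z.add 0%Z p) - (IZR s + corrected_end s 1 p))
        with (- (corrected_end s 1 p - IZR (endpoint p))) by (unfold endpoint; ring).
      rewrite Rabs_Ropp. apply corrected_end_close.
    - rewrite Ewalk_add_const, Ewalk_scal, Ewalk_start_sq by auto. lra. }
  rewrite ES2_S.
  pose proof (Hs 1%Z ltac:(red; auto)). pose proof (Hs (-1)%Z ltac:(red; auto)).
  apply Rabs_le_between in H. apply Rabs_le_between in H0. apply Rabs_le. lra.
Qed.

Lemma start_sq_mean_linear n :
  Rabs (start_sq_mean n - INR n * nu)
  <= sq_mean_bound + poisson_corr_bound + Rabs (sq_incr_at 1).
Proof.
  unfold start_sq_mean. pose proof (sq_mean_linear n 1 ltac:(lia)).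
  pose proof (poisson_mean_bound 1).
  pose proof (proj1 (Rabs_le_between (sq_incr_at 1) _) (Rle_refl _)).
  apply Rabs_le_between in H. apply Rabs_le_between in H0. apply Rabs_le. lra.
Qed.

Lemma ES2_cv : Un_cv (fun n => ES2 d n / INR n) nu.
Proof.
  apply Un_cv_div_INR. intros eta Heta. pose proof nu_pos.
  set (eps := eta / (nu + 1)).
  assert (He : 0 < eps) by (apply Rdiv_lt_0_compat; lra).
  assert (Hepsnu : eps * nu <= eta).
  { unfold eps. apply Rmult_le_reg_r with (nu + 1); [lra |].
    replace (eta / (nu + 1) * nu * (nu + 1)) with (eta * nu) by (field; lra). nra. }
  set (B := sq_mean_bound + poisson_corr_bound + Rabs (sq_incr_at 1)).
  exists (eps * B + pos_corr_bound ^ 2 * (1 + / eps) + B + nu). intros n.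
  pose proof (ES2_S_close n eps He). pose proof (start_sq_mean_linear n). fold B in H1.
  apply Rabs_le_between in H1. rewrite S_INR. pose proof (pos_INR n).
  assert (eps * nu * INR n <= eta * INR n) by (apply Rmult_le_compat_r; lra).
  apply Rabs_le_between in H0. apply Rabs_le. nra.
Qed.

Lemma recross_run_survival j : forall k,
  recross_run d (S k) j * survival k = survival (k + j).
Proof.
  induction j; intros k; simpl; [rewrite Nat.add_0_r; ring |].
  rewrite Nat.add_succ_r, <- Nat.add_succ_l, <- IHj. simpl. fold (recross k). ring.
Qed.

Lemma tau_pmf_S j : tau_pmf d (S j) = exit_prob j.
Proof.
  unfold tau_pmf. change (all_paths (S (S j))) with
    (map (cons 1%Z) (all_paths (S j)) ++ map (cons (-1)%Z) (all_paths (S j))).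
  rewrite map_app, sumR_app, !map_map.
  assert (Hs : forall s, is_step s ->
    sumR (map (fun x => if tau_event (S j) (s :: x) then path_prob d (s :: x) else 0)
              (all_paths (S j))) = / 2 * exit_prob j).
  { intros s Hs.
    transitivity (/ 2 * Ewalk d (S j) s 1 (fun p => if alt_then_exit s j p then 1 else 0)).
    - unfold Ewalk. rewrite <- sumR_map_scal. apply sumR_map_ext. intros x Hx.
      destruct (all_paths_steps _ _ Hx). rewrite tau_event_cons by auto.
      destruct alt_then_exit; [| ring]. destruct Hs as [-> | ->]; simpl; ring.
    - rewrite Ewalk_alt_then_exit by (lra || auto).
      pose proof (recross_run_survival j 0) as HT. simpl survival in HT.
      rewrite Rmult_1_r in HT. rewrite HT. unfold exit_prob. simpl survival.
      change (1 + j)%nat with (S j). fold (recross j). ring. }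
  rewrite (Hs 1%Z), (Hs (-1)%Z) by (red; auto). field.
Qed.

Lemma tau_pmf_0 : tau_pmf d 0 = 0.
Proof. unfold tau_pmf. simpl. ring. Qed.

Lemma infinite_sum_tau_odd :
  infinite_sum (fun k => if Nat.odd k then tau_pmf d k else 0) prob_tau_odd.
Proof.
  apply is_series_Reals, is_series_decr_1.
  match goal with |- is_series _ ?L => replace L with prob_tau_odd end;
    [| cbv [Nat.odd Nat.even negb]; change (prob_tau_odd = prob_tau_odd + - 0); ring].
  apply is_series_ext with odd_tau_term.
  { intros n. unfold odd_tau_term. rewrite Nat.odd_succ, tau_pmf_S. reflexivity. }
  apply Series_correct, ex_series_odd_tau.
Qed.

Lemma infinite_sum_tau_even :
  infinite_sum (fun k => if Nat.even k then tau_pmf d k else 0) prob_tau_even.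
Proof.
  apply is_series_Reals, is_series_decr_1.
  match goal with |- is_series _ ?L => replace L with prob_tau_even end;
    [| cbv [Nat.even]; rewrite tau_pmf_0; change (prob_tau_even = prob_tau_even + - 0); ring].
  apply is_series_ext with even_tau_term.
  { intros n. unfold even_tau_term. rewrite Nat.even_succ, tau_pmf_S. reflexivity. }
  apply Series_correct, ex_series_even_tau.
Qed.

(* Summation by parts: the partial sums equal [sum survival - (N+1) survival (N+1)]. *)
Lemma is_series_S_exit_prob : is_series (fun k => INR (S k) * exit_prob k) tau_mean.
Proof.
  unfold is_series. change (is_lim_seq (sum_n (fun k => INR (S k) * exit_prob k)) tau_mean).
  apply is_lim_seq_ext with (fun N => sum_n survival N - INR (S N) * survival (S N)).
  { induction n; [rewrite !sum_O; unfold exit_prob; simpl; ring |].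
    rewrite !sum_Sn, <- IHn. change (plus ?a ?b) with (a + b).
    unfold exit_prob. rewrite (S_INR (S n)). ring. }
  replace tau_mean with (tau_mean - 0) by ring.
  apply is_lim_seq_minus'; [exact (Series_correct _ ex_series_survival) |].
  apply is_lim_seq_le_le with (fun _ => 0) (fun n => INR (S n) * (1 - d) ^ n).
  - intros n. pose proof (survival_pos (S n)). pose proof (survival_le_geom (S n)).
    assert (0 < INR (S n)) by (apply lt_0_INR; lia).
    assert (0 <= (1 - d) ^ n) by (apply pow_le; lra).
    split; [nra |]. apply Rmult_le_compat_l; [lra |]. simpl in H0 |- *. nra.
  - apply is_lim_seq_const.
  - apply is_lim_seq_S_mul_pow. lra.
Qed.

Lemma infinite_sum_tau_mean : infinite_sum (fun k => INR k * tau_pmf d k) tau_mean.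
Proof.
  apply is_series_Reals, is_series_decr_1.
  match goal with |- is_series _ ?L => replace L with tau_mean end;
    [| change (tau_mean = tau_mean + - (0 * tau_pmf d 0)); ring].
  apply is_series_ext with (fun k => INR (S k) * exit_prob k).
  { intros n. rewrite tau_pmf_S. reflexivity. }
  apply is_series_S_exit_prob.
Qed.

(** * The order of tau_mean *)

Lemma tau_mean_split N : tau_mean = psum survival N + tail survival N.
Proof.
  induction N; simpl.
  - unfold tau_mean, tail. rewrite Rplus_0_l. apply Series_ext; reflexivity.
  - rewrite IHN. destruct (tail_dominated survival 1 N) as [Hex _].
    { intros n. pose proof (survival_pos n). rewrite Rabs_right; lra. }
    rewrite (tail_S _ _ Hex). ring.
Qed.

Lemma tail_survival_bounds N : 0 <= tail survival N <= survival N / d.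
Proof.
  destruct (tail_dominated survival 1 N) as [Hex H].
  { intros n. pose proof (survival_pos n). rewrite Rabs_right; lra. }
  split.
  - apply Series_nonneg; auto. intros; left; apply survival_pos.
  - rewrite Rmult_1_l in H. apply Rabs_le_between in H. lra.
Qed.

(* [prod_{i<k} (2+i)/(3+i) = 2/(k+2)], and [r - d] lies between [r (1 - 3d/2)]
   and [r (1 - d)] for [r] in [2/3, 1). *)
Lemma survival_upper j : survival j <= 2 / (INR j + 2) * (1 - d) ^ j.
Proof.
  induction j; [simpl; lra |].
  simpl survival. rewrite recross_val, S_INR.
  pose proof (ratio_bounds j). pose proof (pos_INR j). pose proof (survival_pos j).
  assert ((2 + INR j) / (3 + INR j) - d <= (2 + INR j) / (3 + INR j) * (1 - d)) by nra.
  apply Rle_trans with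
    (2 / (INR j + 2) * (1 - d) ^ j * ((2 + INR j) / (3 + INR j) * (1 - d))).
  - apply Rmult_le_compat; auto; lra.
  - right. simpl. field. lra.
Qed.

Lemma survival_lower j : 2 / (INR j + 2) * (1 - 3 * d / 2) ^ j <= survival j.
Proof.
  induction j; [simpl; lra |].
  simpl survival. rewrite recross_val, S_INR.
  pose proof (ratio_bounds j). pose proof (pos_INR j).
  assert ((2 + INR j) / (3 + INR j) * (1 - 3 * d / 2) <= (2 + INR j) / (3 + INR j) - d) by nra.
  assert (0 <= (1 - 3 * d / 2) ^ j) by (apply pow_le; lra).
  assert (0 <= 2 / (INR j + 2)) by (apply Rdiv_le_0_compat; lra).
  apply Rle_trans with
    (2 / (INR j + 2) * (1 - 3 * d / 2) ^ j * ((2 + INR j) / (3 + INR j) * (1 - 3 * d / 2))).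
  - right. simpl. field. lra.
  - apply Rmult_le_compat; auto; apply Rmult_le_pos; lra.
Qed.

Lemma survival_le_harmonic j : survival j <= 2 * / (INR j + 2).
Proof.
  pose proof (survival_upper j). pose proof (pos_INR j).
  pose proof (pow_le_1 (1 - d) j ltac:(lra)). pose proof (pow_le (1 - d) j ltac:(lra)).
  assert (0 < / (INR j + 2)) by (apply Rinv_0_lt_compat; lra).
  unfold Rdiv in *. nra.
Qed.

(* Cut the series at [N = floor (1/d)]. *)
Lemma tau_mean_upper : d <= 1/100 -> tau_mean <= 4 + 2 * (- ln d).
Proof.
  intros Hd2. destruct (nfloor_ex (/ d)) as [N HN]; [left; apply Rinv_0_lt_compat; lra |].
  rewrite (tau_mean_split N). pose proof (tail_survival_bounds N).
  assert (Hhead : psum survival N <= 2 * psum (fun j => / (INR j + 2)) N).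
  { rewrite <- psum_scal. apply psum_le. intros j _. apply survival_le_harmonic. }
  assert (Htail : survival N / d <= 2).
  { pose proof (survival_le_harmonic N).
    assert (/ (INR N + 2) <= d).
    { rewrite <- (Rinv_inv d). apply Rinv_le_contravar; [apply Rinv_0_lt_compat |]; lra. }
    apply Rmult_le_reg_r with d; [lra |].
    unfold Rdiv; rewrite Rmult_assoc, Rinv_l, Rmult_1_r by lra. nra. }
  assert (Hln : ln (INR N + 1) <= ln 2 - ln d).
  { rewrite <- ln_div by lra. apply ln_le; [pose proof (pos_INR N); lra |].
    assert (1 <= / d) by (rewrite <- Rinv_1; apply Rinv_le_contravar; lra).
    unfold Rdiv. lra. }
  assert (ln 2 < 1).
  { rewrite <- (ln_exp 1). apply ln_increasing; [lra |]. pose proof (exp_ineq1 1). lra. }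
  pose proof (psum_harmonic_le N). lra.
Qed.

(* Cut the series at [N = floor (1/(3d))], below which [survival j >= 1/(j+2)]. *)
Lemma tau_mean_lower : d <= 1/100 -> - ln d - ln 6 <= tau_mean.
Proof.
  intros Hd2. destruct (nfloor_ex (/ (3 * d))) as [N HN]; [left; apply Rinv_0_lt_compat; lra |].
  rewrite (tau_mean_split N). pose proof (tail_survival_bounds N).
  set (y := 1 - 3 * d / 2).
  assert (Hy : 1/2 <= y ^ N).
  { eapply Rle_trans; [| apply Bernoulli_ineq; unfold y; lra].
    assert (INR N * (3 * d) <= 1).
    { apply Rmult_le_reg_r with (/ (3 * d)); [apply Rinv_0_lt_compat; lra |].
      rewrite Rmult_assoc, Rinv_r, Rmult_1_r, Rmult_1_l by lra. lra. }
    lra. }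
  assert (Hhead : psum (fun j => / (INR j + 2)) N <= psum survival N).
  { apply psum_le. intros j Hj. pose proof (survival_lower j). fold y in H0.
    pose proof (pow_le_pow_antitone y j N ltac:(unfold y; lra) ltac:(lia)).
    pose proof (pos_INR j). assert (0 < / (INR j + 2)) by (apply Rinv_0_lt_compat; lra).
    unfold Rdiv in H0. nra. }
  assert (Hln : - ln d - ln 6 <= ln (INR N + 2) - ln 2).
  { replace (- ln d - ln 6) with (ln (/ (3 * d)) - ln 2).
    - apply Rplus_le_compat_r, ln_le; [apply Rinv_0_lt_compat |]; lra.
    - rewrite ln_Rinv, ln_mult by lra. replace 6 with (3 * 2) by ring.
      rewrite ln_mult by lra. ring. }
  pose proof (psum_harmonic_ge N). lra.
Qed.

Lemma nu_log_bounds : d < 1/100 -> 1/9 / (- ln d) <= nu <= 16 / (- ln d).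
Proof.
  intros Hd1. set (L := - ln d).
  assert (HL : ln 100 < L).
  { assert (ln d < ln (/ 100)) by (apply ln_increasing; lra). rewrite ln_Rinv in H by lra.
    unfold L; lra. }
  destruct ln_100_bounds as [H4 H6].
  pose proof (tau_mean_upper ltac:(lra)). pose proof (tau_mean_lower ltac:(lra)). fold L in H, H0.
  pose proof prob_tau_odd_lower. pose proof prob_tau_even_lower.
  pose proof prob_tau_odd_even. pose proof tau_mean_ge1.
  assert (Hq : 1/8 <= prob_tau_even) by nra.
  assert (Hqm1 : prob_tau_even * tau_mean <= 3 * L) by nra.
  assert (Hqm2 : 1/8 * (L/2) <= prob_tau_even * tau_mean) by nra.
  unfold nu. split.
  - apply Rle_trans with (prob_tau_odd / (3 * L)).
    + unfold Rdiv. replace (1 * / 9 * / L) with (1/3 * / (3 * L)) by (field; lra).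
      apply Rmult_le_compat_r; [left; apply Rinv_0_lt_compat |]; lra.
    + unfold Rdiv. apply Rmult_le_compat_l; [lra |]. apply Rinv_le_contravar; nra.
  - apply Rle_trans with (1 / (prob_tau_even * tau_mean)).
    + unfold Rdiv. apply Rmult_le_compat_r; [left; apply Rinv_0_lt_compat |]; nra.
    + unfold Rdiv. replace (16 * / L) with (1 * / (1/8 * (L/2))) by (field; lra).
      apply Rmult_le_compat_l; [lra |]. apply Rinv_le_contravar; nra.
Qed.

End Delta.

Lemma nu_vanishes eps : eps > 0 ->
  exists eta, eta > 0 /\ forall d, 0 < d < eta -> Rabs (nu d) < eps.
Proof.
  intros Heps. exists (Rmin (1/100) (exp (- (16 / eps)))).
  split; [apply Rmin_pos; [lra | apply exp_pos] |].
  intros d Hd.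
  assert (H1 : d < 1/100) by (eapply Rlt_le_trans; [apply Hd | apply Rmin_l]).
  assert (H2 : d < exp (- (16 / eps))) by (eapply Rlt_le_trans; [apply Hd | apply Rmin_r]).
  assert (Hln : 16 / eps < - ln d).
  { apply ln_increasing in H2; [| lra]. rewrite ln_exp in H2. lra. }
  assert (Hpos : 0 < 16 / eps) by (apply Rdiv_lt_0_compat; lra).
  destruct (nu_log_bounds d ltac:(lra) ltac:(lra)) as [_ Hup].
  pose proof (nu_pos d ltac:(lra)). rewrite Rabs_right by lra.
  eapply Rle_lt_trans; [apply Hup |].
  apply Rmult_lt_reg_r with (- ln d); [lra |].
  unfold Rdiv; rewrite Rmult_assoc, Rinv_l, Rmult_1_r by lra.
  unfold Rdiv in Hln. apply Rmult_lt_reg_r with (/ eps); [apply Rinv_0_lt_compat; lra |].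
  replace (eps * - ln d * / eps) with (- ln d) by (field; lra). lra.
Qed.

Theorem theorem3 :
  exists nu : R -> R,
    (forall delta : R, 0 < delta < 2 / 3 ->
       Un_cv (fun n => ES2 delta n / INR n) (nu delta) /\
       0 < nu delta /\
       exists p_odd p_even Etau : R,
         infinite_sum (fun k => if Nat.odd k then tau_pmf delta k else 0) p_odd /\
         infinite_sum (fun k => if Nat.even k then tau_pmf delta k else 0) p_even /\
         infinite_sum (fun k => INR k * tau_pmf delta k) Etau /\
         nu delta = p_odd / (p_even * Etau)) /\
    (forall eps : R, eps > 0 -> exists eta : R, eta > 0 /\
       forall delta : R, 0 < delta < eta -> Rabs (nu delta) < eps) /\
    (exists c C delta0 : R, 0 < c /\ c <= C /\ 0 < delta0 < 2 / 3 /\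
       forall delta : R, 0 < delta < delta0 ->
         c / Rabs (ln delta) <= nu delta <= C / Rabs (ln delta)).
Proof.
  exists nu. split; [| split].
  - intros d Hd. split; [apply ES2_cv; auto |]. split; [apply nu_pos; auto |].
    exists (prob_tau_odd d), (prob_tau_even d), (tau_mean d).
    repeat split; [apply infinite_sum_tau_odd | apply infinite_sum_tau_even
                  | apply infinite_sum_tau_mean]; auto.
  - exact nu_vanishes.
  - exists (1/9), 16, (1/100). do 3 (split; [lra |]). intros d Hd.
    assert (ln d < 0) by (rewrite <- ln_1; apply ln_increasing; lra).
    rewrite Rabs_left by lra. apply nu_log_bounds; lra.
Qed.
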